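(* Assume (A1)–(A4) and let $b$ be consistent. Then the ADMM sequences $\{x_k\}$ and $\{y_k\}$ are bounded and $$\sum_{k=1}^\infty\big(D_{\mu_k}f(y_{k+1},y_k)+E_k\big)<\infty.$$ In particular $Ax_k\to b$, $Wx_k-y_k\to0$ and $y_{k+1}-y_k\to0$ as $k\to\infty$.
   Context: $\mathcal X,\mathcal Y,\mathcal H$ are real Hilbert spaces. Standing assumptions: (A1) $A:\mathcal X\to\mathcal H$ is bounded linear. (A2) $f:\mathcal Y\to(-\infty,\infty]$ is proper, lower semicontinuous and strongly convex with constant $c_0>0$: $f(ty_1+(1-t)y_2)+c_0t(1-t)\|y_1-y_2\|^2\le tf(y_1)+(1-t)f(y_2)$ for all $y_1,y_2$, $t\in[0,1]$. (A3) $W:\mathscr D(W)\subset\mathcal X\to\mathcal Y$ is a densely defined closed linear operator. (A4) There is $c_1>0$ with $\|Ax\|^2+\|Wx\|^2\ge c_1\|x\|^2$ for all $x\in\mathscr D(W)$. $\mathscr D(f)=\{y:f(y)<\infty\}$; $b\in\mathcal H$ is consistent if $b=Ax$ for some $x\in\mathscr D(W)$ with $Wx\in\mathscr D(f)$. ADMM: fix $\rho_1,\rho_2>0$ and initial $y_0\in\mathcal Y$, $\lambda_0\in\mathcal H$, $\mu_0\in\mathcal Y$. For $k=0,1,\dots$: $x_{k+1}=\arg\min_{x\in\mathscr D(W)}\{\langle\lambda_k,Ax\rangle+\langle\mu_k,Wx\rangle+\frac{\rho_1}{2}\|Ax-b\|^2+\frac{\rho_2}{2}\|Wx-y_k\|^2\}$,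 $y_{k+1}=\arg\min_{y\in\mathcal Y}\{f(y)-\langle\mu_k,y\rangle+\frac{\rho_2}{2}\|Wx_{k+1}-y\|^2\}$, $\lambda_{k+1}=\lambda_k+\rho_1(Ax_{k+1}-b)$, $\mu_{k+1}=\mu_k+\rho_2(Wx_{k+1}-y_{k+1})$. (These minimizers exist and are unique.) Residuals $r_k=Ax_k-b$, $s_k=Wx_k-y_k$ and $E_k=\rho_1\|r_k\|^2+\rho_2\|s_k\|^2+\rho_2\|y_k-y_{k-1}\|^2$ for $k\ge1$. One has $\mu_k\in\partial f(y_k)$ for $k\ge1$. Bregman distance: for $y$ with $\mu\in\partial f(y)$, $D_\mu f(\bar y,y)=f(\bar y)-f(y)-\langle\mu,\bar y-y\rangle$. *)

From Stdlib Require Import Reals Lra.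
Open Scope R_scope.

Record Hilbert := {
  hcar :> Type;
  hzero : hcar;
  hadd : hcar -> hcar -> hcar;
  hopp : hcar -> hcar;
  hscal : R -> hcar -> hcar;
  hinner : hcar -> hcar -> R;
  hadd_assoc : forall x y z, hadd x (hadd y z) = hadd (hadd x y) z;
  hadd_comm : forall x y, hadd x y = hadd y x;
  hadd_zero : forall x, hadd x hzero = x;
  hadd_opp : forall x, hadd x (hopp x) = hzero;
  hscal_assoc : forall a b x, hscal a (hscal b x) = hscal (a * b) x;
  hscal_one : forall x, hscal 1 x = x;
  hscal_distr_l : forall a x y, hscal a (hadd x y) = hadd (hscal a x) (hscal a y);
  hscal_distr_r : forall a b x, hscal (a + b) x = hadd (hscal a x) (hscal b x);
  hinner_sym : forall x y, hinner x y = hinner y x;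
  hinner_add_l : forall x y z, hinner (hadd x y) z = hinner x z + hinner y z;
  hinner_scal_l : forall a x y, hinner (hscal a x) y = a * hinner x y;
  hinner_pos : forall x, 0 <= hinner x x;
  hinner_def : forall x, hinner x x = 0 -> x = hzero;
  hcomplete : forall u : nat -> hcar,
    (forall eps, 0 < eps -> exists N, forall m n, (N <= m)%nat -> (N <= n)%nat ->
        sqrt (hinner (hadd (u m) (hopp (u n))) (hadd (u m) (hopp (u n)))) < eps) ->
    exists l, forall eps, 0 < eps -> exists N, forall n, (N <= n)%nat ->
        sqrt (hinner (hadd (u n) (hopp l)) (hadd (u n) (hopp l))) < eps
}.

Arguments hzero {h}.
Arguments hadd {h}.
Arguments hopp {h}.
Arguments hscal {h}.
Arguments hinner {h}.

Definition hsub {X : Hilbert} (x y : X) : X := hadd x (hopp y).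
Definition nrm2 {X : Hilbert} (x : X) : R := hinner x x.
Definition nrm {X : Hilbert} (x : X) : R := sqrt (hinner x x).

Definition conv_to {X : Hilbert} (u : nat -> X) (l : X) : Prop :=
  forall eps, 0 < eps -> exists N, forall n, (N <= n)%nat -> nrm (hsub (u n) l) < eps.

Definition bounded_seq {X : Hilbert} (u : nat -> X) : Prop :=
  exists M, forall n, nrm (u n) <= M.

Definition bounded_linear {X H : Hilbert} (A : X -> H) : Prop :=
  (forall x y, A (hadd x y) = hadd (A x) (A y)) /\
  (forall a x, A (hscal a x) = hscal a (A x)) /\
  (exists C, forall x, nrm (A x) <= C * nrm x).

Definition densely_defined_closed_linear {X Y : Hilbert} (D : X -> Prop) (W : X -> Y) : Prop :=
  D hzero /\
  (forall x y, D x -> D y -> D (hadd x y)) /\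
  (forall a x, D x -> D (hscal a x)) /\
  (forall x y, D x -> D y -> W (hadd x y) = hadd (W x) (W y)) /\
  (forall a x, D x -> W (hscal a x) = hscal a (W x)) /\
  (forall x eps, 0 < eps -> exists z, D z /\ nrm (hsub x z) < eps) /\
  (forall (u : nat -> X) x y, (forall n, D (u n)) -> conv_to u x ->
       conv_to (fun n => W (u n)) y -> D x /\ W x = y).

(* Extended-real valued functions into (-oo, +oo]: None stands for +oo. *)
Definition ext_lt (c : R) (v : option R) : Prop :=
  match v with None => True | Some a => c < a end.

Definition proper {Y : Hilbert} (f : Y -> option R) : Prop := exists y, f y <> None.

Definition lsc {Y : Hilbert} (f : Y -> option R) : Prop :=
  forall y c, ext_lt c (f y) ->
    exists delta, 0 < delta /\ forall z, nrm (hsub z y) < delta -> ext_lt c (f z).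

(* strong convexity with constant c0; when f y1 or f y2 = +oo the inequality is trivial
   (with the convention 0 * (+oo) = 0) *)
Definition strongly_convex {Y : Hilbert} (f : Y -> option R) (c0 : R) : Prop :=
  forall y1 y2 t v1 v2, 0 <= t <= 1 -> f y1 = Some v1 -> f y2 = Some v2 ->
    exists w, f (hadd (hscal t y1) (hscal (1 - t) y2)) = Some w /\
      w + c0 * t * (1 - t) * nrm2 (hsub y1 y2) <= t * v1 + (1 - t) * v2.

Definition consistent {X Y H : Hilbert} (A : X -> H) (D : X -> Prop) (W : X -> Y)
  (f : Y -> option R) (b : H) : Prop :=
  exists x, D x /\ b = A x /\ f (W x) <> None.

Definition x_obj {X Y H : Hilbert} (A : X -> H) (W : X -> Y) (b : H) (rho1 rho2 : R)
  (lam : H) (mu : Y) (yk : Y) (x : X) : R :=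
  hinner lam (A x) + hinner mu (W x) + rho1 / 2 * nrm2 (hsub (A x) b)
  + rho2 / 2 * nrm2 (hsub (W x) yk).

Definition ADMM_seq {X Y H : Hilbert} (A : X -> H) (D : X -> Prop) (W : X -> Y)
  (f : Y -> option R) (b : H) (rho1 rho2 : R)
  (x : nat -> X) (y : nat -> Y) (lam : nat -> H) (mu : nat -> Y) : Prop :=
  forall k,
    (D (x (S k)) /\ forall z, D z ->
       x_obj A W b rho1 rho2 (lam k) (mu k) (y k) (x (S k))
       <= x_obj A W b rho1 rho2 (lam k) (mu k) (y k) z) /\
    (exists v, f (y (S k)) = Some v /\ forall z w, f z = Some w ->
       v - hinner (mu k) (y (S k)) + rho2 / 2 * nrm2 (hsub (W (x (S k))) (y (S k)))
       <= w - hinner (mu k) z + rho2 / 2 * nrm2 (hsub (W (x (S k))) z)) /\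
    lam (S k) = hadd (lam k) (hscal rho1 (hsub (A (x (S k))) b)) /\
    mu (S k) = hadd (mu k) (hscal rho2 (hsub (W (x (S k))) (y (S k)))).

Definition bregman {Y : Hilbert} (f : Y -> option R) (mu : Y) (yb y : Y) : option R :=
  match f yb, f y with
  | Some a, Some c => Some (a - c - hinner mu (hsub yb y))
  | _, _ => None
  end.

(* E_k, for k >= 1 *)
Definition Ek {X Y H : Hilbert} (A : X -> H) (W : X -> Y) (b : H) (rho1 rho2 : R)
  (x : nat -> X) (y : nat -> Y) (k : nat) : R :=
  rho1 * nrm2 (hsub (A (x k)) b) + rho2 * nrm2 (hsub (W (x k)) (y k))
  + rho2 * nrm2 (hsub (y k) (y (k - 1)%nat)).

From Stdlib Require Import Reals Lra Lia.
Open Scope R_scope.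

(* Two optimality conditions drive everything: the x-update is stationary
   along the domain of [W], and the y-update makes [mu (S k)] a subgradient
   of [f] at [y (S k)], with a quadratic gain from strong convexity.  Tested
   against consecutive iterates they show that the residual energy [Ek] is
   nonincreasing and that a Lagrangian-type quantity, corrected by multiples
   of [Ek] and of the last y-step, gains at least half the next energy at
   every step.  Tested against a feasible point they bound that quantity from
   above, so the energies are summable; the Bregman distances lie between 0
   and half the next energy, and the same bounds (together with (A4) for [x])
   give boundedness of the iterates. *)

Lemma hinner_zero_l {X : Hilbert} (v : X) : hinner hzero v = 0.
Proof.
  assert (E : hinner (hadd (@hzero X) hzero) v = hinner (@hzero X) v)
    by now rewrite hadd_zero.
  rewrite hinner_add_l in E; lra.
Qed.

Lemma hinner_zero_r {X : Hilbert} (v : X) : hinner v hzero = 0.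
Proof. rewrite hinner_sym; apply hinner_zero_l. Qed.

Lemma hinner_add_r {X : Hilbert} (u v w : X) :
  hinner u (hadd v w) = hinner u v + hinner u w.
Proof. now rewrite hinner_sym, hinner_add_l, (hinner_sym _ v), (hinner_sym _ w). Qed.

Lemma hinner_scal_r {X : Hilbert} a (u v : X) : hinner u (hscal a v) = a * hinner u v.
Proof. now rewrite hinner_sym, hinner_scal_l, hinner_sym. Qed.

Lemma hinner_opp_l {X : Hilbert} (u v : X) : hinner (hopp u) v = - hinner u v.
Proof.
  assert (E : hinner (hadd u (hopp u)) v = 0) by (rewrite hadd_opp; apply hinner_zero_l).
  rewrite hinner_add_l in E; lra.
Qed.

Lemma hinner_opp_r {X : Hilbert} (u v : X) : hinner u (hopp v) = - hinner u v.
Proof. now rewrite hinner_sym, hinner_opp_l, hinner_sym. Qed.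

Lemma eq_of_nrm2_hsub0 {X : Hilbert} (u v : X) : nrm2 (hsub u v) = 0 -> u = v.
Proof.
  intro E; apply hinner_def in E; unfold hsub in E.
  transitivity (hadd (hadd u (hopp v)) v).
  - now rewrite <- hadd_assoc, (hadd_comm _ (hopp v)), hadd_opp, hadd_zero.
  - now rewrite E, hadd_comm, hadd_zero.
Qed.

(* [inner_expand] unfolds inner products bilinearly down to atoms and
   [inner_sym] identifies [hinner u v] with [hinner v u]; facts about the
   iterates then become linear in these atoms, so [lra]/[nra] can combine them. *)
Ltac inner_expand := unfold nrm2, hsub;
  repeat rewrite ?hinner_add_l, ?hinner_add_r, ?hinner_scal_l, ?hinner_scal_r,
    ?hinner_opp_l, ?hinner_opp_r, ?hinner_zero_l, ?hinner_zero_r.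

Ltac inner_sym := repeat match goal with |- context [@hinner ?h ?u ?v] =>
  match goal with |- context [@hinner h v u] =>
    tryif constr_eq u v then fail else rewrite (hinner_sym h u v) end end.

Ltac inner_lra := inner_expand; inner_sym; lra.

Lemma hopp_scal {X : Hilbert} (u : X) : hopp u = hscal (-1) u.
Proof. apply eq_of_nrm2_hsub0; inner_lra. Qed.

Lemma hsub0 {X : Hilbert} (u : X) : hsub u hzero = u.
Proof. apply eq_of_nrm2_hsub0; inner_lra. Qed.

Lemma nrm2_ge0 {X : Hilbert} (u : X) : 0 <= nrm2 u.
Proof. apply hinner_pos. Qed.

Lemma nrm2_hsub_le {X : Hilbert} (u a : X) : nrm2 u <= 2 * nrm2 a + 2 * nrm2 (hsub u a).
Proof. pose proof (nrm2_ge0 (hsub (hscal 2 a) u)) as P; revert P; inner_lra. Qed.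

Lemma nrm2_hsubC {X : Hilbert} (u v : X) : nrm2 (hsub u v) = nrm2 (hsub v u).
Proof. inner_lra. Qed.

Lemma young_inner {X : Hilbert} (e v : X) c r : 0 < c ->
  r * hinner v e <= c / 2 * nrm2 e + r * r / (2 * c) * nrm2 v.
Proof.
  intro Hc; pose proof (nrm2_ge0 (hsub (hscal c e) (hscal r v))) as Hp.
  apply (Rmult_le_reg_l (2 * c)); [lra|].
  replace (2 * c * (c / 2 * nrm2 e + r * r / (2 * c) * nrm2 v))
    with (c * c * nrm2 e + r * r * nrm2 v) by (field; lra).
  revert Hp; inner_lra.
Qed.

Lemma nonneg_of_quadratic_nonneg_near0 a b :
  (forall t, 0 < t -> t <= 1 -> 0 <= t * a + t * t * b) -> 0 <= a.
Proof.
  intro H; destruct (Rle_lt_dec 0 a) as [|Ha]; [assumption|exfalso].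
  pose proof (Rle_abs b); pose proof (Rabs_pos b).
  set (M := Rabs b - a + 1).
  set (t := - a / (2 * M)).
  assert (HtM : t * (2 * M) = - a) by (unfold t; field; unfold M; lra).
  assert (Ht : 0 < t) by (unfold t; apply Rdiv_lt_0_compat; unfold M; lra).
  assert (Ht1 : t <= 1) by (unfold M in HtM; nra).
  specialize (H t Ht Ht1).
  assert (0 <= a + t * b) by nra.
  assert (t * b <= t * M) by (unfold M; nra).
  nra.
Qed.

Lemma linear_coef_eq0_of_quadratic_nonneg a b :
  (forall t, 0 <= t * a + t * t * b) -> a = 0.
Proof.
  intro H.
  assert (0 <= a) by (apply (nonneg_of_quadratic_nonneg_near0 a b); auto).
  assert (0 <= - a).
  { apply (nonneg_of_quadratic_nonneg_near0 (- a) b); intros t _ _.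
    specialize (H (- t)); lra. }
  lra.
Qed.

Lemma series_term_cv0 (a : nat -> R) l : Un_cv (sum_f_R0 a) l -> Un_cv a 0.
Proof.
  intros Hl eps Heps.
  destruct (Hl (eps / 2)) as [N HN]; [lra|].
  exists (S N); intros n Hn.
  destruct n as [|n]; [lia|].
  specialize (HN (S n) ltac:(lia)) as H1; specialize (HN n ltac:(lia)) as H2.
  unfold Rdist in *; simpl sum_f_R0 in H1.
  rewrite Rminus_0_r; apply Rabs_def2 in H1, H2; apply Rabs_def1; lra.
Qed.

Lemma partial_sums_le_of_lyapunov (P e : nat -> R) B :
  (forall n, P n + e n <= P (S n)) -> (forall n, P n <= B) ->
  forall N, sum_f_R0 e N <= B - P 0%nat.
Proof.
  intros Hinc HB N.
  enough (sum_f_R0 e N <= P (S N) - P 0%nat) by (specialize (HB (S N)); lra).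
  induction N as [|N IH]; simpl; [specialize (Hinc 0%nat) | specialize (Hinc (S N))]; lra.
Qed.

Lemma sum_f_R0_le_head_tail (e : nat -> R) N : (forall n, 0 <= e n) ->
  sum_f_R0 e N <= e 0%nat + sum_f_R0 (fun n => e (S n)) N.
Proof.
  intro He; destruct N as [|N].
  - simpl; pose proof (He 1%nat); lra.
  - rewrite (decomp_sum e (S N)) by lia; simpl.
    pose proof (He (S (S N))); lra.
Qed.

Lemma bounded_seq_of_nrm2_S_bounded {X : Hilbert} (u : nat -> X) :
  (exists B, forall n, nrm2 (u (S n)) <= B) -> bounded_seq u.
Proof.
  intros [B HB]; exists (Rmax (sqrt B) (nrm (u 0%nat))); intros [|n].
  - apply Rmax_r.
  - eapply Rle_trans; [|apply Rmax_l]; apply sqrt_le_1_alt, HB.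
Qed.

Lemma conv_to_of_scaled_nrm2_le {X : Hilbert} (u : nat -> X) l (e : nat -> R) c :
  0 < c -> (forall n, c * nrm2 (hsub (u n) l) <= e n) -> Un_cv e 0 -> conv_to u l.
Proof.
  intros Hc Hue He eps Heps.
  destruct (He (c * (eps * eps))) as [N HN]; [apply Rmult_lt_0_compat; nra|].
  exists N; intros n Hn; specialize (HN n Hn); specialize (Hue n).
  pose proof (nrm2_ge0 (hsub (u n) l)) as Hu0.
  unfold Rdist in HN; rewrite Rminus_0_r in HN; apply Rabs_def2 in HN.
  unfold nrm; rewrite <- (sqrt_square eps) by lra.
  apply sqrt_lt_1_alt; split; [exact Hu0|].
  apply (Rmult_lt_reg_l c); unfold nrm2 in *; lra.
Qed.

Lemma conv_to_S {X : Hilbert} (u : nat -> X) l :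
  conv_to (fun n => u (S n)) l -> conv_to u l.
Proof.
  intros Hu eps Heps; destruct (Hu eps Heps) as [N HN].
  exists (S N); intros [|n] Hn; [lia | apply HN; lia].
Qed.

Lemma Rle_div_of_mul_le a u v : 0 < a -> a * u <= v -> u <= v / a.
Proof. intros Ha Hu; apply (Rmult_le_reg_l a); [lra|]; now field_simplify; [|lra]. Qed.

(* The junk value [0] for [+oo] is only ever read where [f] is finite. *)
Definition fine (v : option R) : R := match v with Some a => a | None => 0 end.

Section ADMM.

Context {X Y H : Hilbert} {A : X -> H} {f : Y -> option R} {c0 : R}
  {D : X -> Prop} {W : X -> Y} {b : H} {rho1 rho2 : R}
  {x : nat -> X} {y : nat -> Y} {lam : nat -> H} {mu : nat -> Y}.

Hypotheses (A_add : forall u v, A (hadd u v) = hadd (A u) (A v))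
  (A_scal : forall a u, A (hscal a u) = hscal a (A u))
  (W_lin : densely_defined_closed_linear D W)
  (c0_gt0 : 0 < c0) (f_sc : strongly_convex f c0)
  (rho1_gt0 : 0 < rho1) (rho2_gt0 : 0 < rho2)
  (admm : ADMM_seq A D W f b rho1 rho2 x y lam mu).

Local Notation fy k := (fine (f (y k))).
Local Notation r k := (hsub (A (x k)) b).
Local Notation s k := (hsub (W (x k)) (y k)).
Local Notation E k := (Ek A W b rho1 rho2 x y k).

Lemma f_y_S k : f (y (S k)) = Some (fy (S k)).
Proof. destruct (admm k) as [_ [[v [Hv _]] _]]; now rewrite Hv. Qed.

Lemma D_x_S k : D (x (S k)).
Proof. apply (admm k). Qed.

Lemma lam_S k : lam (S k) = hadd (lam k) (hscal rho1 (r (S k))).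
Proof. apply (admm k). Qed.

Lemma mu_S k : mu (S k) = hadd (mu k) (hscal rho2 (s (S k))).
Proof. apply (admm k). Qed.

Lemma Ek_S k : E (S k) =
  rho1 * nrm2 (r (S k)) + rho2 * nrm2 (s (S k)) + rho2 * nrm2 (hsub (y (S k)) (y k)).
Proof. unfold Ek; now rewrite Nat.sub_succ, Nat.sub_0_r. Qed.

Lemma W_sub u v : D u -> D v -> D (hsub u v) /\ W (hsub u v) = hsub (W u) (W v).
Proof.
  destruct W_lin as [_ [Dadd [Dscal [Wadd [Wscal _]]]]]; intros Du Dv.
  unfold hsub; rewrite !hopp_scal; split; [auto|]; rewrite Wadd, Wscal; auto.
Qed.

Lemma A_sub u v : A (hsub u v) = hsub (A u) (A v).
Proof. unfold hsub; now rewrite A_add, !hopp_scal, A_scal. Qed.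

(* The x-update uses [lam k], [mu k]; absorbing its residual terms turns its
   stationarity condition into one for the updated multipliers. *)
Lemma x_update_stationary k d : D d ->
  hinner (lam (S k)) (A d) + hinner (mu (S k)) (W d)
  + rho2 * hinner (hsub (y (S k)) (y k)) (W d) = 0.
Proof.
  destruct W_lin as [_ [Dadd [Dscal [Wadd [Wscal _]]]]]; intro Dd.
  rewrite lam_S, mu_S.
  apply (linear_coef_eq0_of_quadratic_nonneg _ (rho1 / 2 * nrm2 (A d) + rho2 / 2 * nrm2 (W d))).
  intro t; destruct (admm k) as [[_ Hmin] _].
  specialize (Hmin (hadd (x (S k)) (hscal t d)) (Dadd _ _ (D_x_S k) (Dscal t d Dd))).
  unfold x_obj in Hmin; rewrite A_add, A_scal, Wadd, Wscal in Hmin by auto using D_x_S.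
  revert Hmin; inner_lra.
Qed.

Lemma x_update_stationary_sub k u v : D u -> D v ->
  hinner (lam (S k)) (hsub (A u) (A v)) + hinner (mu (S k)) (hsub (W u) (W v))
  + rho2 * hinner (hsub (y (S k)) (y k)) (hsub (W u) (W v)) = 0.
Proof.
  intros Du Dv; destruct (W_sub u v Du Dv) as [Dd Wd].
  rewrite <- A_sub, <- Wd; now apply x_update_stationary.
Qed.

(* [mu (S k)] is a subgradient of [f] at [y (S k)]; the extra [c0 * nrm2]
   comes from strong convexity. *)
Lemma y_update_subgradient k z w : f z = Some w ->
  fy (S k) + hinner (mu (S k)) (hsub z (y (S k))) + c0 * nrm2 (hsub z (y (S k))) <= w.
Proof.
  intro Hz; destruct (admm k) as [_ [[v [Hv Hymin]] _]].
  rewrite f_y_S in Hv; injection Hv as <-.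
  enough (0 <= w - fy (S k) - hinner (mu (S k)) (hsub z (y (S k)))
               - c0 * nrm2 (hsub z (y (S k)))) by lra.
  apply (nonneg_of_quadratic_nonneg_near0 _ ((c0 + rho2 / 2) * nrm2 (hsub z (y (S k))))).
  intros t Ht0 Ht1.
  destruct (f_sc z (y (S k)) t w (fy (S k)) (conj (Rlt_le _ _ Ht0) Ht1) Hz (f_y_S k))
    as [wt [Hwt Hconv]].
  pose proof (Hymin _ _ Hwt) as Hmin.
  rewrite mu_S; revert Hconv Hmin; inner_lra.
Qed.

Lemma energy_decrease k :
  E (S (S k)) + 4 * c0 * nrm2 (hsub (y (S (S k))) (y (S k))) <= E (S k).
Proof.
  rewrite !Ek_S.
  pose proof (x_update_stationary_sub (S k) _ _ (D_x_S (S k)) (D_x_S k)) as H1.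
  pose proof (x_update_stationary_sub k _ _ (D_x_S (S k)) (D_x_S k)) as H2.
  pose proof (y_update_subgradient k _ _ (f_y_S (S k))) as H3.
  pose proof (y_update_subgradient (S k) _ _ (f_y_S k)) as H4.
  pose proof (nrm2_ge0 (hsub (A (x (S (S k)))) (A (x (S k))))) as N1.
  pose proof (nrm2_ge0 (hadd (hsub (W (x (S (S k)))) (W (x (S k))))
                             (hsub (y k) (y (S k))))) as N2.
  rewrite (lam_S (S k)), (mu_S (S k)) in H1; rewrite (mu_S (S k)) in H4.
  revert H1 H2 H3 H4 N1 N2; inner_expand; inner_sym; intros; nra.
Qed.

(* Index [k] of [lagr], [lyap] stands for the paper's [k+1]. *)
Definition lagr k := fy (S k) + hinner (lam (S k)) (r (S k)) + hinner (mu (S k)) (s (S k))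
  + rho2 * hinner (hsub (y (S k)) (y k)) (s (S k)).

(* The weight [rho2 / c0] lets [energy_decrease] absorb the negative y-step
   terms of [lagr_increment]. *)
Definition lyap k :=
  lagr k - rho2 / c0 * E (S k) - rho2 * nrm2 (hsub (y (S k)) (y k)).

Lemma lagr_increment k :
  lagr (S k) - lagr k >=
  (3 * c0 - rho2 / 2) * nrm2 (hsub (y (S (S k))) (y (S k))) + rho1 * nrm2 (r (S (S k)))
  + rho2 / 2 * nrm2 (s (S (S k))) - rho2 * nrm2 (hsub (y (S k)) (y k)).
Proof.
  unfold lagr.
  pose proof (x_update_stationary_sub k _ _ (D_x_S (S k)) (D_x_S k)) as H1.
  pose proof (y_update_subgradient k _ _ (f_y_S (S k))) as H3.
  pose proof (y_update_subgradient (S k) _ _ (f_y_S k)) as H4.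
  pose proof (nrm2_ge0 (hsub (hsub (y (S k)) (y k)) (s (S (S k))))) as N3.
  pose proof (nrm2_ge0 (hsub (hsub (y (S k)) (y k)) (hsub (y (S (S k))) (y (S k))))) as N4.
  rewrite (lam_S (S k)), (mu_S (S k)); rewrite (mu_S (S k)) in H4.
  revert H1 H3 H4 N3 N4; inner_expand; inner_sym; intros; nra.
Qed.

Lemma lyap_increase k : lyap k + E (S (S k)) / 2 <= lyap (S k).
Proof.
  unfold lyap; pose proof (lagr_increment k) as Hinc.
  assert (G : rho2 / c0 * (E (S (S k)) + 4 * c0 * nrm2 (hsub (y (S (S k))) (y (S k))))
              <= rho2 / c0 * E (S k)).
  { apply Rmult_le_compat_l; [apply Rlt_le, Rdiv_lt_0_compat|apply energy_decrease]; lra. }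
  replace (rho2 / c0 * (E (S (S k)) + 4 * c0 * nrm2 (hsub (y (S (S k))) (y (S k)))))
    with (rho2 / c0 * E (S (S k)) + 4 * rho2 * nrm2 (hsub (y (S (S k))) (y (S k)))) in G
    by (field; lra).
  rewrite (Ek_S (S k)) in *.
  pose proof (nrm2_ge0 (r (S (S k)))); pose proof (nrm2_ge0 (s (S (S k)))).
  pose proof (nrm2_ge0 (hsub (y (S (S k))) (y (S k)))).
  nra.
Qed.

Lemma Ek_ge0 k : 0 <= E k.
Proof.
  unfold Ek; pose proof (nrm2_ge0 (r k)); pose proof (nrm2_ge0 (s k));
    pose proof (nrm2_ge0 (hsub (y k) (y (k - 1)%nat))); nra.
Qed.

Lemma Ek_le_E1 k : E (S k) <= E 1%nat.
Proof.
  induction k as [|k IH]; [lra|].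
  pose proof (energy_decrease k); pose proof (nrm2_ge0 (hsub (y (S (S k))) (y (S k)))); nra.
Qed.

Lemma lyap_ge_lyap0 k : lyap 0%nat <= lyap k.
Proof.
  induction k as [|k IH]; [lra|].
  pose proof (lyap_increase k); pose proof (Ek_ge0 (S (S k))); lra.
Qed.

Definition breg k := fy (S k) - fy k - hinner (mu k) (hsub (y (S k)) (y k)).

Lemma breg_bounds k : 0 <= breg (S k) <= E (S (S k)) / 2.
Proof.
  unfold breg; rewrite Ek_S.
  pose proof (y_update_subgradient k _ _ (f_y_S (S k))) as Hlo.
  pose proof (y_update_subgradient (S k) _ _ (f_y_S k)) as Hhi.
  pose proof (nrm2_ge0 (hsub (y (S (S k))) (y (S k)))) as N0.
  pose proof (nrm2_ge0 (hsub (y (S k)) (y (S (S k))))) as N1.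
  pose proof (nrm2_ge0 (r (S (S k)))) as N2.
  pose proof (nrm2_ge0 (hsub (s (S (S k))) (hsub (y (S (S k))) (y (S k))))) as N3.
  rewrite (mu_S (S k)) in Hhi.
  split; revert Hlo Hhi N0 N1 N2 N3; inner_expand; inner_sym; intros; nra.
Qed.

Section Consistent.

Context {xh : X} {fh : R}.
Hypotheses (D_xh : D xh) (b_eq : b = A xh) (f_xh : f (W xh) = Some fh).

Lemma lagr_upper_bound k :
  lagr k + c0 / 2 * nrm2 (hsub (W xh) (y (S k)))
  <= fh + rho2 * rho2 / (2 * c0) * nrm2 (hsub (y (S k)) (y k)).
Proof.
  unfold lagr.
  pose proof (x_update_stationary_sub k _ _ D_xh (D_x_S k)) as H1.
  pose proof (y_update_subgradient k _ _ f_xh) as H3.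
  pose proof (young_inner (hsub (W xh) (y (S k))) (hsub (y (S k)) (y k)) c0 rho2 c0_gt0) as HY.
  rewrite <- b_eq in H1.
  revert H1 H3 HY; inner_expand; inner_sym; intros; lra.
Qed.

Lemma lyap_upper_bound k :
  lyap k + c0 / 2 * nrm2 (hsub (W xh) (y (S k))) <= fh + rho2 / (2 * c0) * E 1%nat.
Proof.
  pose proof (lagr_upper_bound k) as Hup.
  assert (HU : rho2 * nrm2 (hsub (y (S k)) (y k)) <= E 1%nat).
  { pose proof (Ek_le_E1 k) as HE1; rewrite (Ek_S k) in HE1.
    pose proof (nrm2_ge0 (r (S k))); pose proof (nrm2_ge0 (s (S k))); nra. }
  apply Rmult_le_compat_l with (r := rho2 / (2 * c0)) in HU;
    [|apply Rlt_le, Rdiv_lt_0_compat; lra].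
  replace (rho2 / (2 * c0) * (rho2 * nrm2 (hsub (y (S k)) (y k))))
    with (rho2 * rho2 / (2 * c0) * nrm2 (hsub (y (S k)) (y k))) in HU by (field; lra).
  assert (0 <= rho2 / c0 * E (S k))
    by (apply Rmult_le_pos; [apply Rlt_le, Rdiv_lt_0_compat; lra | apply Ek_ge0]).
  pose proof (nrm2_ge0 (hsub (y (S k)) (y k))).
  unfold lyap; nra.
Qed.

Lemma y_S_nrm2_bounded : exists B, forall k, nrm2 (y (S k)) <= B.
Proof.
  exists (2 * nrm2 (W xh)
    + 2 * ((fh + rho2 / (2 * c0) * E 1%nat - lyap 0%nat) / (c0 / 2))).
  intro k; eapply Rle_trans; [apply (nrm2_hsub_le _ (W xh))|].
  rewrite nrm2_hsubC; apply Rplus_le_compat_l, Rmult_le_compat_l; [lra|].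
  apply Rle_div_of_mul_le; [lra|].
  pose proof (lyap_upper_bound k); pose proof (lyap_ge_lyap0 k); lra.
Qed.

Lemma x_S_nrm2_bounded c1 : 0 < c1 ->
  (forall z, D z -> nrm2 (A z) + nrm2 (W z) >= c1 * nrm2 z) ->
  exists B, forall k, nrm2 (x (S k)) <= B.
Proof.
  intros Hc1 Hcoer; destruct y_S_nrm2_bounded as [By HBy].
  exists ((2 * nrm2 b + 2 * (E 1%nat / rho1) + 2 * By + 2 * (E 1%nat / rho2)) / c1).
  intro k; apply Rle_div_of_mul_le; [lra|].
  pose proof (Hcoer _ (D_x_S k)); specialize (HBy k).
  pose proof (nrm2_hsub_le (A (x (S k))) b); pose proof (nrm2_hsub_le (W (x (S k))) (y (S k))).
  pose proof (Ek_le_E1 k) as HE1; rewrite (Ek_S k) in HE1.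
  pose proof (nrm2_ge0 (r (S k))); pose proof (nrm2_ge0 (s (S k))).
  pose proof (nrm2_ge0 (hsub (y (S k)) (y k))).
  assert (nrm2 (r (S k)) <= E 1%nat / rho1) by (apply Rle_div_of_mul_le; nra).
  assert (nrm2 (s (S k)) <= E 1%nat / rho2) by (apply Rle_div_of_mul_le; nra).
  lra.
Qed.

Lemma lyap_bounded k : lyap k <= fh + rho2 / (2 * c0) * E 1%nat.
Proof.
  pose proof (lyap_upper_bound k); pose proof (nrm2_ge0 (hsub (W xh) (y (S k)))); nra.
Qed.

Lemma admm_partial_sums_bounded N :
  sum_f_R0 (fun n => breg (S n) + E (S n)) N
  <= 3 * (E 1%nat / 2 + (fh + rho2 / (2 * c0) * E 1%nat - lyap 0%nat)).
Proof.
  pose proof (partial_sums_le_of_lyapunov lyap (fun n => E (S (S n)) / 2) _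
                lyap_increase lyap_bounded N) as Hsum.
  pose proof (sum_f_R0_le_head_tail (fun n => E (S n) / 2) N
                (fun n => ltac:(pose proof (Ek_ge0 (S n)); lra))) as Hsplit.
  eapply Rle_trans with (r2 := sum_f_R0 (fun n => E (S n) / 2 * 3) N).
  - apply sum_growing; intro n.
    pose proof (breg_bounds n); pose proof (energy_decrease n).
    pose proof (nrm2_ge0 (hsub (y (S (S n))) (y (S n)))); nra.
  - rewrite <- scal_sum; simpl in Hsplit; lra.
Qed.

Lemma admm_series_cv : exists l, Un_cv (sum_f_R0 (fun n => breg (S n) + E (S n))) l.
Proof.
  destruct (growing_cv (sum_f_R0 (fun n => breg (S n) + E (S n)))) as [l Hl].
  - intro n; simpl; pose proof (breg_bounds (S n)); pose proof (Ek_ge0 (S (S n))); lra.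
  - eexists; intros _ [n ->]; apply admm_partial_sums_bounded.
  - now exists l.
Qed.

Lemma admm_terms_cv0 : Un_cv (fun n => breg (S n) + E (S n)) 0.
Proof. destruct admm_series_cv as [l Hl]; exact (series_term_cv0 _ _ Hl). Qed.

Lemma residual_A_cv : conv_to (fun k => A (x k)) b.
Proof.
  apply conv_to_S; refine (conv_to_of_scaled_nrm2_le _ _ _ rho1 rho1_gt0 _ admm_terms_cv0).
  intro n; rewrite Ek_S; pose proof (breg_bounds n).
  pose proof (nrm2_ge0 (s (S n))); pose proof (nrm2_ge0 (hsub (y (S n)) (y n))); nra.
Qed.

Lemma residual_W_cv : conv_to (fun k => s k) hzero.
Proof.
  apply conv_to_S; refine (conv_to_of_scaled_nrm2_le _ _ _ rho2 rho2_gt0 _ admm_terms_cv0).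
  intro n; rewrite hsub0, Ek_S; pose proof (breg_bounds n).
  pose proof (nrm2_ge0 (r (S n))); pose proof (nrm2_ge0 (hsub (y (S n)) (y n))); nra.
Qed.

Lemma y_step_cv : conv_to (fun k => hsub (y (S k)) (y k)) hzero.
Proof.
  refine (conv_to_of_scaled_nrm2_le _ _ _ rho2 rho2_gt0 _ admm_terms_cv0).
  intro n; rewrite hsub0, Ek_S; pose proof (breg_bounds n).
  pose proof (nrm2_ge0 (r (S n))); pose proof (nrm2_ge0 (s (S n))); nra.
Qed.

End Consistent.

End ADMM.

Theorem lemma2p5 (X Y H : Hilbert) (A : X -> H) (f : Y -> option R) (c0 : R)
  (D : X -> Prop) (W : X -> Y) (c1 : R) (b : H) (rho1 rho2 : R)
  (x : nat -> X) (y : nat -> Y) (lam : nat -> H) (mu : nat -> Y) :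
  bounded_linear A ->
  proper f -> lsc f -> 0 < c0 -> strongly_convex f c0 ->
  densely_defined_closed_linear D W ->
  0 < c1 -> (forall z, D z -> nrm2 (A z) + nrm2 (W z) >= c1 * nrm2 z) ->
  consistent A D W f b ->
  0 < rho1 -> 0 < rho2 ->
  ADMM_seq A D W f b rho1 rho2 x y lam mu ->
  bounded_seq x /\ bounded_seq y /\
  (exists d : nat -> R,
     (forall k, (1 <= k)%nat -> bregman f (mu k) (y (S k)) (y k) = Some (d k)) /\
     exists l, infinite_sum (fun n => d (S n) + Ek A W b rho1 rho2 x y (S n)) l) /\
  conv_to (fun k => A (x k)) b /\
  conv_to (fun k => hsub (W (x k)) (y k)) hzero /\
  conv_to (fun k => hsub (y (S k)) (y k)) hzero.
Proof.
  intros [A_add [A_scal _]] _ _ c0_gt0 f_sc W_lin c1_gt0 coercive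
    [xh [D_xh [b_eq f_xh]]] rho1_gt0 rho2_gt0 admm.
  destruct (f (W xh)) as [fh|] eqn:E_xh; [|congruence].
  split; [|split; [|split; [|split; [|split]]]].
  - apply bounded_seq_of_nrm2_S_bounded.
    exact (x_S_nrm2_bounded A_add A_scal W_lin c0_gt0 f_sc rho1_gt0 rho2_gt0 admm
             D_xh b_eq E_xh c1 c1_gt0 coercive).
  - apply bounded_seq_of_nrm2_S_bounded.
    exact (y_S_nrm2_bounded A_add A_scal W_lin c0_gt0 f_sc rho1_gt0 rho2_gt0 admm
             D_xh b_eq E_xh).
  - exists (@breg _ f y mu); split.
    + intros [|k] Hk; [lia|].
      unfold bregman, breg; now rewrite (f_y_S admm (S k)), (f_y_S admm k).
    + exact (admm_series_cv A_add A_scal W_lin c0_gt0 f_sc rho1_gt0 rho2_gt0 admm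
               D_xh b_eq E_xh).
  - exact (residual_A_cv A_add A_scal W_lin c0_gt0 f_sc rho1_gt0 rho2_gt0 admm
             D_xh b_eq E_xh).
  - exact (residual_W_cv A_add A_scal W_lin c0_gt0 f_sc rho1_gt0 rho2_gt0 admm
             D_xh b_eq E_xh).
  - exact (y_step_cv A_add A_scal W_lin c0_gt0 f_sc rho1_gt0 rho2_gt0 admm
             D_xh b_eq E_xh).
Qed.
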